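(* Let $a,b$ be positive integers and $n\ge2$ an integer, and let $h(j)=aj^n+b$ for $j\ge0$, $h(j)=0$ for $j<0$. If $\lfloor a/b\rfloor+1\ge 4$, then $\operatorname{hdepth}(h)\ge4$.
   Context: For a nonzero function $h:\mathbb Z\to\mathbb Z_{\ge 0}$ with $h(j)=0$ for all sufficiently negative $j$, and integers $k\le d$, set $\beta_k^d(h)=\sum_{j\le k}(-1)^{k-j}\binom{d-j}{k-j}h(j)$, and $\operatorname{hdepth}(h)=\max\{d\in\mathbb Z:\ \beta_k^d(h)\ge 0\text{ for all integers }k\le d\}$. *)

From mathcomp Require Import all_boot all_order all_algebra.
Set Implicit Arguments. Unset Strict Implicit. Unset Printing Implicit Defensive.
Import Order.TTheory GRing.Theory Num.Theory.
Local Open Scope ring_scope.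

Definition vanishes_below (L : int) (h : int -> int) : Prop :=
  forall j : int, j < L -> h j = 0.

(* beta_k^d(h) = sum_{j <= k} (-1)^(k-j) C(d-j, k-j) h(j), for k <= d,
   where h vanishes below L, so only j in [L, k] contribute.
   Reindexing j = k - i, i = 0 .. |k - L|; extra terms (when k < L) are
   all zero since h vanishes there.  C(d-j, k-j) = C(|d-k| + i, i). *)
Definition beta (L : int) (h : int -> int) (k d : int) : int :=
  \sum_(i < (`|k - L|%N).+1)
     (-1) ^+ i * ('C(`|d - k|%N + i, i))%:R * h (k - i%:Z).

Definition hdepth_adm (L : int) (h : int -> int) (d : int) : Prop :=
  forall k : int, k <= d -> 0 <= beta L h k d.

Definition is_hdepth (L : int) (h : int -> int) (m : int) : Prop :=
  vanishes_below L h /\ hdepth_adm L h m /\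
  forall d : int, hdepth_adm L h d -> d <= m.

Definition hpoly (a b n : nat) (j : int) : int :=
  if 0 <= j then a%:Z * j ^+ n + b%:Z else 0.

From mathcomp Require Import all_boot all_order all_algebra.
From mathcomp Require Import zify ring.
From Stdlib Require Import Classical.
Import Order.TTheory GRing.Theory Num.Theory.
Local Open Scope ring_scope.

(* For any h vanishing on negative integers with
     h(0) > 0, the formula beta_1^d(h) = h(1) - d h(0) shows that every
     admissible d is at most |h(1)|, so once one admissible d is known the
     admissible set is a nonempty bounded set of integers and has a
     greatest element.
   - Admissibility of 4.  The hypothesis floor(a/b) >= 3 means a >= 3b.
     For k < 0, beta_k^4 = 0; expanding beta_k^4 for k = 0..4 gives
       b,  a - 3b,  a(2^n - 3) + 4b,  a(3^n - 2^(n+1) + 3) - 2b,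
       a(4^n - 3^n + 2^n - 1) + b,
     all nonnegative when a >= 3b and n >= 2. *)

Lemma int_greatest (P : int -> Prop) (d0 B : int) :
  P d0 -> (forall d, P d -> d <= B) ->
  exists m, [/\ P m, forall d, P d -> d <= m & d0 <= m].
Proof.
move=> Pd0 PB.
have bounded : forall d, P d -> d <= d0 + (`|B - d0|%N)%:Z.
  by move=> d /PB; lia.
move: (`|B - d0|%N) bounded => k; elim: k d0 Pd0 => [|k IHk] d0 Pd0 bounded.
  by exists d0; split=> // d /bounded; rewrite addr0.
case: (classic (exists d, P d /\ d0 < d)) => [[d1 [Pd1 lt01]] | no_larger].
  have [|m [Pm m_max le1m]] := IHk d1 Pd1; first by move=> d /bounded; lia.
  by exists m; split=> //; apply: le_trans (ltW lt01) le1m.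
exists d0; split=> // d Pd; rewrite leNgt; apply/negP => lt0d.
by apply: no_larger; exists d.
Qed.

Lemma beta_below (L : int) (h : int -> int) (k d : int) :
  vanishes_below L h -> k < L -> beta L h k d = 0.
Proof.
move=> hL ltkL; rewrite /beta big1 // => i _.
by rewrite hL ?mulr0 //; apply: le_lt_trans ltkL; rewrite lerBlDr lerDl.
Qed.

Lemma beta_1 (h : int -> int) (d : int) :
  1 <= d -> beta 0 h 1 d = h 1 - d * h 0.
Proof.
move=> d_ge1; rewrite /beta subr0 /= !big_ord_recr big_ord0 /= bin0 bin1.
have -> : ((`|d - 1|%N + 1)%:R : int) = d.
  by rewrite natrD natr_absz ger0_norm ?subr_ge0 // intz subrK.
by rewrite subr0 subrr add0r expr0 !mul1r expr1 mulN1r mulNr.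
Qed.

Lemma adm_le_h1 (h : int -> int) (d : int) :
  0 < h 0 -> hdepth_adm 0 h d -> d <= `|h 1|.
Proof.
move=> h0_gt0 adm_d; case: (lerP d 0) => [d_le0 | d_gt0].
  by apply: le_trans d_le0 _.
have := adm_d 1 d_gt0; rewrite beta_1 // subr_ge0 => dh0_le.
apply: le_trans (ler_norm _); apply: le_trans dh0_le.
by rewrite ler_peMr // ltW.
Qed.

Lemma hdepth_exists (h : int -> int) (d0 : int) :
  vanishes_below 0 h -> 0 < h 0 -> hdepth_adm 0 h d0 ->
  exists m, is_hdepth 0 h m /\ d0 <= m.
Proof.
move=> van h0_gt0 adm_d0.
have [m [adm_m m_max le0m]] :=
  int_greatest (hdepth_adm 0 h) d0 `|h 1| adm_d0
    (fun d => @adm_le_h1 h d h0_gt0).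
by exists m.
Qed.

Ltac expand_beta h :=
  rewrite /beta !big_ord_recr big_ord0 /=;
  repeat match goal with |- context [ 'C(?x, ?y) ] =>
    let v := eval vm_compute in 'C(x, y) in change 'C(x, y) with v end;
  repeat match goal with |- context [ h (?x - ?y) ] =>
    let v := eval vm_compute in (x - y) in change (x - y) with v end;
  ring.

Lemma beta4_0 (h : int -> int) : beta 0 h 0 4 = h 0.
Proof. expand_beta h. Qed.
Lemma beta4_2 (h : int -> int) : beta 0 h 2 4 = h 2 - 3 * h 1 + 6 * h 0.
Proof. expand_beta h. Qed.
Lemma beta4_3 (h : int -> int) :
  beta 0 h 3 4 = h 3 - 2 * h 2 + 3 * h 1 - 4 * h 0.
Proof. expand_beta h. Qed.
Lemma beta4_4 (h : int -> int) :
  beta 0 h 4 4 = h 4 - h 3 + h 2 - h 1 + h 0.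
Proof. expand_beta h. Qed.

Lemma hpoly_vanishes (a b n : nat) : vanishes_below 0 (hpoly a b n).
Proof. by move=> j j_lt0; rewrite /hpoly leNgt j_lt0. Qed.

Lemma hpoly_at0 (a b n : nat) : (0 < n)%N -> hpoly a b n 0 = b%:Z.
Proof. by move=> n_gt0; rewrite /hpoly /= expr0n eqn0Ngt n_gt0 mulr0 add0r. Qed.

(* Depth 4 is admissible for h(j) = a j^n + b when a >= 3b and n >= 2;
   writing n = p + 2, the bounds 1 <= 2^p <= 3^p <= 4^p suffice. *)
Lemma hpoly_adm4 (a b p : nat) :
  (3 * b <= a)%N -> hdepth_adm 0 (hpoly a b p.+2) 4.
Proof.
move=> le3ba k le_k4; case: (ltrP k 0) => [k_lt0 | k_ge0].
  by rewrite beta_below //; apply: hpoly_vanishes.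
have pow21 : 1 <= (2 : int) ^+ p by rewrite exprn_ege1.
have pow32 : (2 : int) ^+ p <= 3 ^+ p by apply: lerXn2r.
have pow43 : (3 : int) ^+ p <= 4 ^+ p by apply: lerXn2r.
case: k k_ge0 le_k4 => [m | //] _ le_m4.
case: m le_m4 => [|[|[|[|[|m]]]]] le_m4; last by exfalso; lia.
- by rewrite beta4_0 hpoly_at0.
- by rewrite beta_1 // hpoly_at0 // /hpoly /= expr1n; lia.
- by rewrite beta4_2 hpoly_at0 // /hpoly /= !exprS expr1n; nia.
- by rewrite beta4_3 hpoly_at0 // /hpoly /= !exprS expr1n; nia.
- by rewrite beta4_4 hpoly_at0 // /hpoly /= !exprS expr1n; nia.
Qed.

Theorem lemma3p8 (a b n : nat) :
  (0 < a)%N -> (0 < b)%N -> (2 <= n)%N -> (4 <= (a %/ b).+1)%N ->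
  exists m : int, is_hdepth 0 (hpoly a b n) m /\ 4 <= m.
Proof.
move=> _ b_gt0 n_ge2 quot_ge3.
have le3ba : (3 * b <= a)%N by rewrite -leq_divRL.
have h0_gt0 : 0 < hpoly a b n 0 by rewrite hpoly_at0 ?(leq_trans _ n_ge2).
case: n n_ge2 h0_gt0 => [|[|p]] // _ h0_gt0.
exact: hdepth_exists (hpoly_vanishes a b p.+2) h0_gt0 (hpoly_adm4 a b p le3ba).
Qed.
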